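(* Let $\ell\ge 4$, $s\ge 0$, $r\ge 2$ be integers. There is a constant $c=c(\ell,s,r)$ such that for every $n$ and every $n$-vertex $B(\ell,s)$-free graph $G$, the number of $r$-element subsets of $V(G)$ having more than $\ell+s$ common neighbors in $G$ is at most $cn$.
   Context: The broom $B(\ell,s)$ is the graph obtained from a path on $\ell$ vertices by adding $s$ new vertices, each joined only to a penultimate vertex of the path (a neighbor of an endpoint). A common neighbor of a vertex set $X$ is a vertex adjacent to every vertex of $X$. *)

From mathcomp Require Import all_boot.
Set Implicit Arguments. Unset Strict Implicit. Unset Printing Implicit Defensive.

Definition simple_graph (T : finType) (e : rel T) : Prop :=
  symmetric e /\ irreflexive e.

(* Edge relation of the broom B(l,s) on vertex set 'I_(l+s):
   vertices 0..l-1 form the path 0-1-...-(l-1); vertices l..l+s-1 are the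
   s extra vertices, each joined only to vertex 1 (the neighbor of endpoint 0). *)
Definition broom_edge (l s : nat) (i j : 'I_(l + s)) : bool :=
  [|| (i < l) && (j < l) && ((i.+1 == j :> nat) || (j.+1 == i :> nat)),
      (l <= i) && (j == 1 :> nat)
    | (l <= j) && (i == 1 :> nat)].

Definition contains_broom (T : finType) (e : rel T) (l s : nat) : Prop :=
  exists f : 'I_(l + s) -> T, injective f /\
    forall i j, broom_edge i j -> e (f i) (f j).

Definition broom_free (T : finType) (e : rel T) (l s : nat) : Prop :=
  ~ contains_broom e l s.

Definition common_nbhd (T : finType) (e : rel T) (X : {set T}) : {set T} :=
  [set v | [forall x in X, e x v]].

(* Call u a rich partner of v when v <> u and {v, u} has more than l + s
   common neighbours.  If every vertex of a nonempty set S had at least l rich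
   partners in S, alternating "rich partner, common neighbour" steps would grow
   a path on about l vertices, and l + s common neighbours of its first vertex
   and one of its rich partners leave s + 1 vertices off the path to finish a
   copy of B(l, s).  So a B(l, s)-free graph has in every nonempty S a vertex v
   with fewer than l rich partners in S; every counted r-set through v lies in
   v together with those partners, which accounts for at most 2^l sets, and
   deleting v and inducting gives the bound 2^l * n. *)
From mathcomp Require Import all_boot zify.
Set Implicit Arguments. Unset Strict Implicit. Unset Printing Implicit Defensive.

Section PeelingBound.
Variables (T : finType) (F : pred {set T}) (k : nat).
Hypothesis F_set0 : ~~ F set0.
Hypothesis peel : forall S : {set T}, S != set0 ->
  exists2 v, v \in S & exists2 N : {set T}, #|N| <= k &
    forall X, F X -> X \subset S -> v \in X -> X \subset N.

Lemma card_family_sub_le (S : {set T}) :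
  #|[set X | F X & X \subset S]| <= 2 ^ k * #|S|.
Proof.
have [n] := ubnP #|S|; elim: n S => // n IH S.
have [-> _|S_ne0] := eqVneq S set0.
  rewrite (_ : [set X | _ & _] = set0) ?cards0 //.
  apply/setP=> X; rewrite !inE subset0.
  by apply: contraNF F_set0 => /andP[FX /eqP X0]; rewrite -X0.
rewrite ltnS => leS; have [v vS [N leN peelN]] := peel S_ne0.
have cardS : #|S| = #|S :\ v|.+1 by rewrite (cardsD1 v S) vS.
have split_fam : [set X | F X & X \subset S]
    \subset [set X | F X & X \subset S :\ v] :|: powerset N.
  apply/subsetP=> X; rewrite !inE => /andP[FX XS].
  have [vX|vX] := boolP (v \in X); first by rewrite peelN ?orbT.
  rewrite FX /=; apply/orP; left; apply/subsetP=> u uX.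
  by rewrite !inE (subsetP XS u uX) andbT; apply: contraNneq vX => <-.
apply: (leq_trans (subset_leq_card split_fam)).
apply: (leq_trans (leq_card_setU _ _)).
rewrite cardS mulnS addnC card_powerset leq_add ?leq_pexp2l //.
by apply: IH; rewrite cardS in leS.
Qed.

End PeelingBound.

Lemma common_nbhd_sub (T : finType) (e : rel T) (A B : {set T}) :
  A \subset B -> common_nbhd e B \subset common_nbhd e A.
Proof.
move=> AB; apply/subsetP=> v; rewrite !inE => /forall_inP eBv.
by apply/forall_inP=> x xA; apply: eBv; apply: (subsetP AB).
Qed.

Lemma exists_notin_seq (T : finType) (A : {set T}) (q : seq T) :
  size q < #|A| -> exists2 y, y \in A & y \notin q.
Proof.
move=> ltqA; have [subAq|/subsetPn //] := boolP (A \subset q).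
by have := leq_trans (subset_leq_card subAq) (card_size q); rewrite leqNgt ltqA.
Qed.

Section Broom.
Variables (T : finType) (e : rel T) (l s : nat).
Hypothesis e_sym : symmetric e.

Definition rich (v u : T) := (v != u) && (l + s < #|common_nbhd e [set v; u]|).

Definition rich_partners (v : T) (S : {set T}) := [set u in S | rich v u].

Lemma rich_of_mem (X : {set T}) (v u : T) :
  v \in X -> u \in X -> v != u -> l + s < #|common_nbhd e X| -> rich v u.
Proof.
move=> vX uX vu bigX; rewrite /rich vu (leq_trans bigX) //.
apply/subset_leq_card/common_nbhd_sub.
by apply/subsetP=> z; rewrite !inE => /orP[]/eqP->.
Qed.

Lemma contains_broom_of_path (x : T) (p : seq T) (B : {set T}) :
  2 <= l -> path e x p -> uniq (x :: p) -> l <= (size p).+2 ->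
  s < #|B| -> [disjoint B & x :: p] -> {in B, forall b, e x b} ->
  contains_broom e l s.
Proof.
move=> l2 px ux lep ltsB dBP xB; set P := x :: p.
have lePs : l <= (size P).+1 by [].
set L := enum B; have ltsL : s < size L by rewrite /L -cardE.
have LB m : m < size L -> nth x L m \in B by move=> ?; rewrite -mem_enum mem_nth.
have xL m : m < size L -> e x (nth x L m) by move/LB; apply: xB.
have LnotP a b : a < size L -> b < size P -> nth x L a = nth x P b -> False.
  by move=> /LB aB bP eab; move: (disjointFr dBP aB); rewrite eab mem_nth.
have injL a b : nth x L a = nth x L b -> a < size L -> b < size L -> a = b.
  by move=> eab aL bL; apply/eqP; rewrite -(nth_uniq x aL bL (enum_uniq _)) eab.
have injP a b : nth x P a = nth x P b -> a < size P -> b < size P -> a = b.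
  by move=> eab aP bP; apply/eqP; rewrite -(nth_uniq x aP bP ux) eab.
have adjP a : a.+1 < size P -> e (nth x P a) (nth x P a.+1).
  by move=> aP; move/(pathP x): px; apply.
(* Vertex 0 and the s leaves are taken from L, vertices 1, ..., l - 1 from P. *)
pose f (i : 'I_(l + s)) : T := if i == 0 :> nat then nth x L 0
  else if i < l then nth x P i.-1 else nth x L (i - l).+1.
exists f; split.
- move=> i j eij; apply: val_inj; move: eij; rewrite /f.
  have := ltn_ord i; have := ltn_ord j.
  case: (eqVneq (i : nat) 0) => Hi; case: (eqVneq (j : nat) 0) => Hj;
  case: (ltnP i l) => Hil; case: (ltnP j l) => Hjl => //= Hjs His eij.
  all: try first [ lia
   | (have := injL _ _ eij; lia)
   | (have := injP _ _ eij; lia)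
   | (exfalso; apply: (LnotP _ _ _ _ eij); lia)
   | (exfalso; apply: (LnotP _ _ _ _ (esym eij)); lia) ].
- move=> i j; rewrite /broom_edge /f.
  have := ltn_ord i; have := ltn_ord j.
  case: (eqVneq (i : nat) 0) => Hi; case: (eqVneq (j : nat) 0) => Hj;
  case: (ltnP i l) => Hil; case: (ltnP j l) => Hjl => //= Hjs His.
  all: rewrite ?orbF => H; repeat (case/orP: H => H); move/eqP: H => E.
  all: first [ lia
   | ((have -> : (j : nat).-1 = 0 by lia); rewrite /P /= e_sym; apply: xL; lia)
   | ((have -> : (i : nat).-1 = 0 by lia); rewrite /P /=; apply: xL; lia)
   | ((have -> : (j : nat).-1 = (i : nat).-1.+1 by lia); apply: adjP; lia)
   | ((have -> : (i : nat).-1 = (j : nat).-1.+1 by lia);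
      rewrite e_sym; apply: adjP; lia) ].
Qed.

Section RichSet.
Variable S : {set T}.
Hypothesis many_rich : forall v, v \in S -> l <= #|rich_partners v S|.

Lemma rich_path_grow (x : T) : x \in S -> forall j, 2 * j < l ->
  exists p, [/\ path e x p, uniq (x :: p), last x p \in S & size p = 2 * j].
Proof.
move=> xS; elim=> [|j IH] ltjl; first by exists [::]; rewrite /= xS.
have [p [px ux lastS sizep]] := IH (ltac:(lia)); set z := last x p in lastS.
have [y yR ynot] : exists2 y, y \in rich_partners z S & y \notin x :: p.
  by apply: exists_notin_seq; rewrite /= sizep; have := many_rich lastS; lia.
move: yR; rewrite inE => /andP[yS /andP[zy bigzy]].
have [c cN cnot] :
    exists2 c, c \in common_nbhd e [set z; y] & c \notin y :: x :: p.
  by apply: exists_notin_seq; rewrite /= sizep; lia.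
move: cN; rewrite inE => /forall_inP cN.
have zc := cN z (set21 z y); have yc := cN y (set22 z y).
exists (rcons (rcons p c) y); split.
- by rewrite !rcons_path px last_rcons zc e_sym yc.
- rewrite -!rcons_cons !rcons_uniq ux mem_rcons inE.
  move: cnot; rewrite !inE negb_or => /andP[cy ->]; rewrite andbT.
  by move: ynot; rewrite !inE (eq_sym y c) (negbTE cy) andbT.
- by rewrite last_rcons.
- by rewrite !size_rcons sizep; lia.
Qed.

Lemma contains_broom_of_rich : 2 <= l -> S != set0 -> contains_broom e l s.
Proof.
move=> l2 /set0Pn[x xS].
have [p [px ux _ sizep]] := rich_path_grow xS (ltac:(lia) : 2 * (l.-1 %/ 2) < l).
have [y yR _] : exists2 y, y \in rich_partners x S & y \notin [::].
  by apply: exists_notin_seq; have := many_rich xS; rewrite /=; lia.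
move: yR; rewrite inE => /andP[_ /andP[_ bigxy]].
pose B := common_nbhd e [set x; y] :\: [set z in x :: p].
apply: (@contains_broom_of_path x p B) => //; try lia.
- rewrite cardsD; have : #|common_nbhd e [set x; y] :&: [set z in x :: p]| <= l.
    apply: leq_trans (subset_leq_card (subsetIr _ _)) _.
    by rewrite cardsE (leq_trans (card_size _)) //= sizep; lia.
  lia.
- by rewrite disjoint_subset; apply/subsetP=> z; rewrite !inE => /andP[].
- move=> b; rewrite !inE => /andP[_ /forall_inP]; apply.
  exact: set21.
Qed.

End RichSet.

Lemma exists_few_rich_partners (S : {set T}) :
  2 <= l -> broom_free e l s -> S != set0 ->
  exists2 v, v \in S & #|rich_partners v S| < l.
Proof.
move=> l2 bfree S_ne0; have [/exists_inP[v vS few]|/exists_inP noFew] :=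
  boolP [exists v in S, #|rich_partners v S| < l]; first by exists v.
case: bfree; apply: contains_broom_of_rich l2 S_ne0 => v vS.
by rewrite leqNgt; apply/negP=> few; apply: noFew; exists v.
Qed.

Lemma broom_free_peel (S : {set T}) :
  2 <= l -> broom_free e l s -> S != set0 ->
  exists2 v, v \in S & exists2 N : {set T}, #|N| <= l &
    forall X, l + s < #|common_nbhd e X| -> X \subset S -> v \in X -> X \subset N.
Proof.
move=> l2 bfree /(exists_few_rich_partners l2 bfree)[v vS few].
exists v => //; exists (v |: rich_partners v S).
  by rewrite cardsU1; case: (v \notin _) => /=; lia.
move=> X bigX XS vX; apply/subsetP=> u uX; rewrite !inE.
have [//|uv] := eqVneq u v; rewrite (subsetP XS u uX) /=.
by apply: (rich_of_mem vX uX) => //; rewrite eq_sym.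
Qed.

End Broom.

Theorem mainTheorem4 (l s r : nat) :
  4 <= l -> 2 <= r ->
  exists c : nat,
    forall (T : finType) (e : rel T),
      simple_graph e -> broom_free e l s ->
      #|[set X : {set T} | (#|X| == r) && (l + s < #|common_nbhd e X|)]|
        <= c * #|T|.
Proof.
move=> l4 r2; exists (2 ^ l) => T e [e_sym _] bfree.
pose F := [pred X : {set T} | (#|X| == r) && (l + s < #|common_nbhd e X|)].
have F_set0 : ~~ F set0 by rewrite inE cards0 -(subnKC r2).
have peel (S : {set T}) : S != set0 -> exists2 v, v \in S &
    exists2 N : {set T}, #|N| <= l &
      forall X, F X -> X \subset S -> v \in X -> X \subset N.
  move=> /(broom_free_peel e_sym (ltnW (ltnW l4)) bfree)[v vS [N leN peelN]].
  by exists v => //; exists N => // X /andP[_]; apply: peelN.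
have := card_family_sub_le F_set0 peel setT.
rewrite cardsT; apply: leq_trans; apply: subset_leq_card.
by apply/subsetP=> X; rewrite !inE subsetT andbT.
Qed.
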